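(* Let $\mathcal M$ be an o-minimal structure in a language $\mathcal L$ with universe $M$, and $\mathcal N$ an expansion of $\mathcal M$ such that every open definable set is $\mathcal L$-definable and $\mathcal N$ admits a dimension function $\dim$ compatible with $\mathcal M$. Then a finite union of full definable subsets of $M^n$ is full.
   Context: ''Definable'' means definable in $\mathcal N$ with parameters; ''$\mathcal L$-definable'' means definable in $\mathcal M$ with parameters. A dimension function compatible with $\mathcal M$ is a map $\dim$ from definable sets to $\{-\infty\}\cup\mathbb N$ such that for all definable $X,Y\subseteq M^n$, $a\in M$: (D1) $\dim\{a\}=0$, $\dim M=1$, $\dim X=-\infty$ iff $X=\emptyset$; (D2) $\dim(X\cup Y)=\max\{\dim X,\dim Y\}$; (D3) for a definable family $\{X_t\}_{t\in I}$ of pairwise disjoint sets: (a) each $\{t\in I:\dim X_t=d\}$ is definable; (b) if all $X_t$ have dimension $k$ then $\dim\bigcup_t X_t=\dim I+k$; (D4) definable bijections preserve $\dim$; (D5) on $\mathcal L$-definable sets $\dim$ is the o-minimal dimension; (D6) every definable $f:M^n\to M$ agrees with an $\mathcal L$-definable $F:M^n\to M$ outside a definable set of dimension $<n$. $cl$ denotes topological closure. A definable set $X$ is full if $\dim(cl(X)\setminus X)<\dim X$. *)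

From mathcomp Require Import all_boot.
Set Implicit Arguments. Unset Strict Implicit. Unset Printing Implicit Defensive.

Definition pt (M : Type) (n : nat) := 'I_n -> M.
Definition pset (M : Type) (n : nat) := pt M n -> Prop.

Definition ext_last M n (x : pt M n) (y : M) : pt M n.+1 :=
  fun i => if unlift ord_max i is Some j then x j else y.

Definition join M m n (t : pt M m) (x : pt M n) : pt M (m + n) :=
  fun i => match split i with inl j => t j | inr j => x j end.
Definition lft M m n (z : pt M (m + n)) : pt M m := fun i => z (lshift n i).
Definition rgt M m n (z : pt M (m + n)) : pt M n := fun j => z (rshift m j).

Definition dlo M (lt : M -> M -> Prop) : Prop :=
  [/\ (forall x, ~ lt x x),
      (forall x y z, lt x y -> lt y z -> lt x z),
      (forall x y, lt x y \/ x = y \/ lt y x),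
      (forall x y, lt x y -> exists z, lt x z /\ lt z y)
    & (forall x, (exists y, lt y x) /\ (exists y, lt x y))].

(* A structure on (M,<) given by its collections S n of definable (with
   parameters) subsets of M^n: a Boolean algebra in each arity, closed under
   preimages by coordinate maps (products, permutations, diagonal embeddings),
   under projection along the last coordinate, containing equality, the order
   and all singletons (parameters). *)
Record structure M (lt : M -> M -> Prop) (S : forall n, pset M n -> Prop) : Prop := {
  st_order : dlo lt;
  st_full : forall n, S n (fun _ => True);
  st_compl : forall n A, S n A -> S n (fun x => ~ A x);
  st_union : forall n A B, S n A -> S n B -> S n (fun x => A x \/ B x);
  st_preim : forall m n (f : 'I_m -> 'I_n) A, S m A -> S n (fun x => A (fun i => x (f i)));
  st_proj : forall n (A : pset M n.+1), S n.+1 A -> S n (fun x => exists y, A (ext_last x y));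
  st_eq : S 2 (fun x => x ord0 = x ord_max);
  st_lt : S 2 (fun x => lt (x ord0) (x ord_max));
  st_singleton : forall a : M, S 1 (fun x => x ord0 = a)
}.

(* Open interval with endpoints in M u {-oo,+oo} (None = infinite endpoint). *)
Definition in_interval M (lt : M -> M -> Prop) (lo hi : option M) (x : M) : Prop :=
  (if lo is Some a then lt a x else True) /\ (if hi is Some b then lt x b else True).

Definition o_minimal M (lt : M -> M -> Prop) (S : forall n, pset M n -> Prop) : Prop :=
  structure lt S /\
  forall A : pset M 1, S 1 A ->
    exists (p q : nat) (pts : 'I_p -> M) (ivs : 'I_q -> option M * option M),
      forall x : pt M 1, A x <->
        (exists i, x ord0 = pts i) \/ (exists j, in_interval lt (ivs j).1 (ivs j).2 (x ord0)).

Definition expansion M (lt : M -> M -> Prop) (SM SN : forall n, pset M n -> Prop) : Prop :=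
  structure lt SN /\ forall n A, SM n A -> SN n A.

Definition box M (lt : M -> M -> Prop) n (a b : pt M n) : pset M n :=
  fun x => forall i, lt (a i) (x i) /\ lt (x i) (b i).
Definition is_open M (lt : M -> M -> Prop) n (U : pset M n) : Prop :=
  forall x, U x -> exists a b, box lt a b x /\ forall y, box lt a b y -> U y.
Definition cl M (lt : M -> M -> Prop) n (X : pset M n) : pset M n :=
  fun x => forall a b, box lt a b x -> exists y, box lt a b y /\ X y.
Definition has_interior M (lt : M -> M -> Prop) n (U : pset M n) : Prop :=
  exists x, U x /\ exists a b, box lt a b x /\ forall y, box lt a b y -> U y.

Definition open_definable_L M (lt : M -> M -> Prop) (SM SN : forall n, pset M n -> Prop) : Prop :=
  forall n U, SN n U -> is_open lt U -> SM n U.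

(* Values of dimension: None = -oo, Some k = k. *)
Definition dmax (d e : option nat) : option nat :=
  match d, e with
  | None, _ => e | _, None => d | Some a, Some b => Some (maxn a b) end.
Definition dlt (d e : option nat) : Prop :=
  match d, e with
  | _, None => False | None, Some _ => True | Some a, Some b => a < b end.
Definition dadd (d e : option nat) : option nat :=
  match d, e with Some a, Some b => Some (a + b) | _, _ => None end.

Definition coord_proj M n k (f : 'I_k -> 'I_n) (X : pset M n) : pset M k :=
  fun y => exists x, X x /\ forall i, x (f i) = y i.
Definition is_omin_dim M (lt : M -> M -> Prop) n (X : pset M n) (d : option nat) : Prop :=
  match d with
  | None => forall x, ~ X x
  | Some k =>
      (exists f : 'I_k -> 'I_n, injective f /\ has_interior lt (coord_proj f X)) /\
      (forall k' (f : 'I_k' -> 'I_n), injective f -> has_interior lt (coord_proj f X) -> k' <= k)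
  end.

Definition graph_on M n m (X : pset M n) (f : pt M n -> pt M m) : pset M (n + m) :=
  fun z => X (lft z) /\ forall j, rgt z j = f (lft z) j.
Definition graph1 M n (f : pt M n -> M) : pset M (n + 1) :=
  fun z => rgt z ord0 = f (lft z).

Record dim_compatible M (lt : M -> M -> Prop) (SM SN : forall n, pset M n -> Prop)
    (dim : forall n, pset M n -> option nat) : Prop := {
  D1_point : forall a : M, dim 1 (fun x => x ord0 = a) = Some 0;
  D1_line : dim 1 (fun _ => True) = Some 1;
  D1_empty : forall n X, SN n X -> (dim n X = None <-> forall x, ~ X x);
  D2 : forall n X Y, SN n X -> SN n Y ->
         dim n (fun x => X x \/ Y x) = dmax (dim n X) (dim n Y);
  D3 : forall m n (I : pset M m) (Z : pset M (m + n)),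
         SN m I -> SN (m + n) Z ->
         (* pairwise disjoint fibres X_t = {x | (t,x) in Z}, t in I *)
         (forall t t', I t -> I t' -> (exists x, Z (join t x) /\ Z (join t' x)) ->
            forall i, t i = t' i) ->
         (forall d, SN m (fun t => I t /\ dim n (fun x => Z (join t x)) = d)) /\
         (forall k, (forall t, I t -> dim n (fun x => Z (join t x)) = k) ->
            dim n (fun x => exists t, I t /\ Z (join t x)) = dadd (dim m I) k);
  D4 : forall n m (X : pset M n) (Y : pset M m) (f : pt M n -> pt M m),
         SN n X -> SN m Y -> SN (n + m) (graph_on X f) ->
         (forall x, X x -> Y (f x)) ->
         (forall x x', X x -> X x' -> (forall j, f x j = f x' j) -> forall i, x i = x' i) ->
         (forall y, Y y -> exists x, X x /\ forall j, f x j = y j) ->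
         dim n X = dim m Y;
  D5 : forall n X, SM n X -> is_omin_dim lt X (dim n X);
  D6 : forall n (f : pt M n -> M), SN (n + 1) (graph1 f) ->
         exists F : pt M n -> M, SM (n + 1) (graph1 F) /\
         exists E : pset M n, SN n E /\ dlt (dim n E) (Some n) /\
           forall x, ~ E x -> f x = F x
}.

Definition full M (lt : M -> M -> Prop) (SN : forall n, pset M n -> Prop)
    (dim : forall n, pset M n -> option nat) n (X : pset M n) : Prop :=
  SN n X /\ dlt (dim n (fun x => cl lt X x /\ ~ X x)) (dim n X).

(* The closure of X u Y is the union of the closures, so the frontier of X u Y
   lies in the union of the frontiers of X and Y.  By (D2) the dimension of a
   finite union is the maximum of the dimensions, hence dimension is monotone,
   and dim (fr (X u Y)) <= max (dim (fr X), dim (fr Y)) < max (dim X, dim Y)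
   = dim (X u Y).  Applying (D2) requires frontiers to be definable, which
   follows from closure of definable sets under Boolean operations and
   quantification over blocks of coordinates. *)
From Stdlib Require Import PropExtensionality FunctionalExtensionality Classical ClassicalEpsilon.
From mathcomp Require Import all_boot zify.
Set Implicit Arguments. Unset Strict Implicit.

Lemma pset_eq M n (A B : pset M n) : (forall x, A x <-> B x) -> A = B.
Proof.
by move=> AB; apply: functional_extensionality => x; apply: propositional_extensionality.
Qed.

Lemma ord_exists_succ k (P : 'I_k.+1 -> Prop) :
  (exists i, P i) <-> P ord0 \/ exists j, P (lift ord0 j).
Proof.
split=> [[i]|[P0|[j Pj]]]; [|by exists ord0|by exists (lift ord0 j)].
by case: (unliftP ord0 i) => [j ->|->]; [right; exists j|left].
Qed.

Lemma ord_forall_succ k (P : 'I_k.+1 -> Prop) :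
  (forall i, P i) <-> P ord0 /\ forall j, P (lift ord0 j).
Proof. by split=> [//|[P0 Plift] i]; case: (unliftP ord0 i) => [j ->|->]. Qed.

Section Coordinates.
Variable M : Type.

Lemma ext_last_lift n (x : pt M n) y j : ext_last x y (lift ord_max j) = x j.
Proof. by rewrite /ext_last liftK. Qed.

Lemma ext_last_max n (x : pt M n) y : ext_last x y ord_max = y.
Proof. by rewrite /ext_last unlift_none. Qed.

Lemma join_lshift m n (t : pt M m) (x : pt M n) i : join t x (lshift n i) = t i.
Proof. by rewrite /join -[lshift n i]/(unsplit (inl i)) unsplitK. Qed.

Lemma join_rshift m n (t : pt M m) (x : pt M n) j : join t x (rshift m j) = x j.
Proof. by rewrite /join -[rshift m j]/(unsplit (inr j)) unsplitK. Qed.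

Lemma lft_join m n (t : pt M m) (x : pt M n) : lft (join t x) = t.
Proof. by apply: functional_extensionality => i; rewrite /lft join_lshift. Qed.

Lemma rgt_join m n (t : pt M m) (x : pt M n) : rgt (join t x) = x.
Proof. by apply: functional_extensionality => j; rewrite /rgt join_rshift. Qed.

Lemma ext_last_split n (y : pt M n.+1) :
  ext_last (fun j => y (lift ord_max j)) (y ord_max) = y.
Proof.
apply: functional_extensionality => i.
by case: (unliftP ord_max i) => [j ->|->]; rewrite ?ext_last_lift ?ext_last_max.
Qed.

Lemma join_nil n (x : pt M n) (y : pt M 0) :
  join x y = fun i => x (cast_ord (addn0 n) i).
Proof.
apply: functional_extensionality => i; rewrite -[i](splitK i).
case: (split i) => [j|[]//]; rewrite join_lshift.
by congr x; apply: val_inj.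
Qed.

Lemma join_ext_last n k (x : pt M n) (y : pt M k) t :
  join x (ext_last y t) = fun i => ext_last (join x y) t (cast_ord (addnS n k) i).
Proof.
apply: functional_extensionality => i; rewrite -[i](splitK i).
case: (split i) => [j|j]; rewrite [unsplit _]/=.
  have -> : cast_ord (addnS n k) (lshift k.+1 j) = lift ord_max (lshift k j).
    by apply: val_inj; rewrite /= /bump leqNgt (ltn_addr _ (ltn_ord j)).
  by rewrite ext_last_lift !join_lshift.
rewrite join_rshift; case: (unliftP ord_max j) => [j' ->|->].
  have -> : cast_ord (addnS n k) (rshift n (lift ord_max j')) = lift ord_max (rshift n j').
    by apply: val_inj; rewrite /= /bump leqNgt ltn_ord leqNgt ltn_add2l ltn_ord.
  by rewrite !ext_last_lift join_rshift.
have -> : cast_ord (addnS n k) (rshift n ord_max) = ord_max by apply: val_inj.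
by rewrite !ext_last_max.
Qed.

End Coordinates.

Definition frontier M (lt : M -> M -> Prop) n (X : pset M n) : pset M n :=
  fun x => cl lt X x /\ ~ X x.

Section Definable.
Variables (M : Type) (lt : M -> M -> Prop) (S : forall n, pset M n -> Prop).
Arguments S : clear implicits.
Hypothesis hS : structure lt S.

Lemma definable_ext n (A B : pset M n) : (forall x, A x <-> B x) -> S n A -> S n B.
Proof. by move=> /pset_eq ->. Qed.

Lemma definable_and n (A B : pset M n) : S n A -> S n B -> S n (fun x => A x /\ B x).
Proof.
move=> SA SB; apply: definable_ext (st_compl hS (st_union hS (st_compl hS SA) (st_compl hS SB))).
by move=> x; tauto.
Qed.

Lemma definable_imp n (A B : pset M n) : S n A -> S n B -> S n (fun x => A x -> B x).
Proof.
move=> SA SB; apply: definable_ext (st_union hS (st_compl hS SA) SB).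
by move=> x; tauto.
Qed.

Lemma definable_lt N (p q : 'I_N) : S N (fun w => lt (w p) (w q)).
Proof. exact: (st_preim hS (fun j : 'I_2 => if val j == 0 then p else q) (st_lt hS)). Qed.

Lemma definable_forall_ord k N (P : 'I_k -> pset M N) :
  (forall i, S N (P i)) -> S N (fun w => forall i, P i w).
Proof.
elim: k P => [|k IH] P SP.
  by apply: definable_ext (st_full hS N) => x; split=> // _ [].
apply: definable_ext (definable_and (SP ord0) (IH _ (fun j => SP (lift ord0 j)))).
by move=> x; rewrite (ord_forall_succ (P^~ x)).
Qed.

Lemma definable_exists k n (A : pset M (n + k)) :
  S (n + k) A -> S n (fun x => exists y : pt M k, A (join x y)).
Proof.
elim: k A => [|k IH] A SA.
  apply: definable_ext (st_preim hS (cast_ord (addn0 n)) SA) => x.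
  split=> [Ax|[y]]; last by rewrite join_nil.
  by exists (fun i => x (widen_ord (leq0n n) i)); rewrite join_nil.
apply: definable_ext (IH _ (st_proj hS (st_preim hS (cast_ord (addnS n k)) SA))) => x.
split=> [[y [t At]]|[y]].
  by exists (ext_last y t); rewrite join_ext_last.
move=> Ay; exists (fun j => y (lift ord_max j)), (y ord_max).
by rewrite /= -join_ext_last ext_last_split.
Qed.

Lemma definable_forall k n (A : pset M (n + k)) :
  S (n + k) A -> S n (fun x => forall y : pt M k, A (join x y)).
Proof.
move=> SA; apply: definable_ext (st_compl hS (definable_exists (st_compl hS SA))) => x.
split=> [notex y|all [y]//]; by apply: NNPP => Ny; apply: notex; exists y.
Qed.

Lemma definable_box n N (fa fb fc : 'I_n -> 'I_N) :
  S N (fun w => box lt (fun i => w (fa i)) (fun i => w (fb i)) (fun i => w (fc i))).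
Proof.
apply: (definable_forall_ord
          (P := fun i w => lt (w (fa i)) (w (fc i)) /\ lt (w (fc i)) (w (fb i)))) => i.
exact: definable_and (definable_lt _ _) (definable_lt _ _).
Qed.

(* Points of M^(n+(n+n)) are read as z = (x, a, b), those of M^((n+(n+n))+n)
   as (z, y). *)
Lemma definable_cl n (X : pset M n) : S n X -> S n (cl lt X).
Proof.
move=> SX.
pose InBoxX (w : pt M ((n + (n + n)) + n)) :=
  box lt (lft (rgt (lft w))) (rgt (rgt (lft w))) (rgt w) /\ X (rgt w).
have SInBoxX : S _ InBoxX.
  apply: definable_and (st_preim hS (@rshift _ n) SX).
  exact: (definable_box (fun i => lshift n (rshift n (lshift n i)))
            (fun i => lshift n (rshift n (rshift n i))) (@rshift _ n)).
pose BoxMeetsX (z : pt M (n + (n + n))) :=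
  exists y, box lt (lft (rgt z)) (rgt (rgt z)) y /\ X y.
have SBoxMeetsX : S _ BoxMeetsX.
  apply: definable_ext (definable_exists SInBoxX) => z.
  by split=> -[y InB]; exists y; move: InB; rewrite /InBoxX lft_join rgt_join.
have SclAt : S _ (fun z => box lt (lft (rgt z)) (rgt (rgt z)) (lft z) -> BoxMeetsX z).
  apply: definable_imp SBoxMeetsX.
  exact: (definable_box (fun i => rshift n (lshift n i)) (fun i => rshift n (rshift n i))
            (@lshift _ (n + n))).
apply: definable_ext (definable_forall SclAt) => x.
by rewrite /BoxMeetsX /cl; split=> [clB a b|clx ab]; [move: (clB (join a b))|];
  rewrite !(lft_join, rgt_join) //; apply: clx.
Qed.

Lemma definable_frontier n (X : pset M n) : S n X -> S n (frontier lt X).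
Proof. by move=> SX; exact: (definable_and (definable_cl SX) (st_compl hS SX)). Qed.

End Definable.

Section Topology.
Variables (M : Type) (lt : M -> M -> Prop).
Hypothesis hlt : dlo lt.

Definition lmax x y := if excluded_middle_informative (lt x y) then y else x.
Definition lmin x y := if excluded_middle_informative (lt x y) then x else y.

Lemma lmax_lt x y z : lt (lmax x y) z <-> lt x z /\ lt y z.
Proof.
case: hlt => _ trans tri _ _; rewrite /lmax.
case: excluded_middle_informative => xy; split=> [|[xz yz]//].
  by move=> yz; split=> //; exact: (trans _ _ _ xy yz).
move=> xz; split=> //; case: (tri x y) => [//|[<- //|yx]]; exact: (trans _ _ _ yx xz).
Qed.

Lemma lt_lmin x y z : lt z (lmin x y) <-> lt z x /\ lt z y.
Proof.
case: hlt => _ trans tri _ _; rewrite /lmin.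
case: excluded_middle_informative => xy; split=> [|[zx zy]//].
  by move=> zx; split=> //; exact: (trans _ _ _ zx xy).
move=> zy; split=> //; case: (tri x y) => [//|[-> //|yx]]; exact: (trans _ _ _ zy yx).
Qed.

Lemma box_meet n (a1 b1 a2 b2 y : pt M n) :
  box lt (fun i => lmax (a1 i) (a2 i)) (fun i => lmin (b1 i) (b2 i)) y <->
  box lt a1 b1 y /\ box lt a2 b2 y.
Proof.
rewrite /box; split=> [yin|[y1 y2] i].
  by split=> i; case: (yin i) => /lmax_lt[? ?] /lt_lmin[? ?].
by rewrite lmax_lt lt_lmin; case: (y1 i); case: (y2 i).
Qed.

Lemma not_cl n (X : pset M n) x :
  ~ cl lt X x -> exists a b, box lt a b x /\ forall y, box lt a b y -> ~ X y.
Proof.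
move=> notcl; apply: NNPP => noBox; apply: notcl => a b xab.
apply: NNPP => noPt; apply: noBox; exists a, b; split=> // y yab Xy.
by apply: noPt; exists y.
Qed.

Lemma cl_union n (X Y : pset M n) x :
  cl lt (fun y => X y \/ Y y) x -> cl lt X x \/ cl lt Y x.
Proof.
move=> clXY; apply: NNPP => /not_or_and[/not_cl[a1 [b1 [x1 X1]]] /not_cl[a2 [b2 [x2 Y2]]]].
have [y [/box_meet[y1 y2] [Xy|Yy]]] := clXY _ _ (proj2 (box_meet _ _ _ _ x) (conj x1 x2)).
  exact: X1 y1 Xy.
exact: Y2 y2 Yy.
Qed.

Lemma frontier_union n (X Y : pset M n) x :
  frontier lt (fun y => X y \/ Y y) x -> frontier lt X x \/ frontier lt Y x.
Proof. by move=> [/cl_union clXY notXY]; rewrite /frontier; tauto. Qed.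

End Topology.

Lemma dlt_dmax e d1 d2 x1 x2 :
  dmax e (dmax d1 d2) = dmax d1 d2 -> dlt d1 x1 -> dlt d2 x2 -> dlt e (dmax x1 x2).
Proof.
case: e => [e|]; case: d1 => [d1|]; case: d2 => [d2|];
  case: x1 => [x1|]; case: x2 => [x2|] //= => [[]]*; lia.
Qed.

Section Full.
Variables (M : Type) (lt : M -> M -> Prop) (SM SN : forall n, pset M n -> Prop).
Variable dim : forall n, pset M n -> option nat.
Arguments SM : clear implicits.
Arguments SN : clear implicits.
Arguments dim : clear implicits.
Hypotheses (hS : structure lt SN) (hD : dim_compatible lt SM SN dim).

Lemma dim_mono n (X Y : pset M n) :
  SN n X -> SN n Y -> (forall x, X x -> Y x) -> dmax (dim n X) (dim n Y) = dim n Y.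
Proof.
move=> SX SY XY; rewrite -(D2 hD SX SY); congr dim.
by apply: pset_eq => x; split=> [[/XY|]|]; auto.
Qed.

Lemma full_union n (X Y : pset M n) :
  full lt SN dim X -> full lt SN dim Y -> full lt SN dim (fun x => X x \/ Y x).
Proof.
move=> [SX frX] [SY frY]; have SXY := st_union hS SX SY.
split=> //; rewrite (D2 hD SX SY).
have SfrX := definable_frontier hS SX; have SfrY := definable_frontier hS SY.
apply: dlt_dmax frX frY; rewrite -(D2 hD SfrX SfrY).
apply: dim_mono (definable_frontier hS SXY) (st_union hS SfrX SfrY) _.
by move=> x; exact: (frontier_union (st_order hS)).
Qed.

Lemma full_bigcup n k (X : 'I_k.+1 -> pset M n) :
  (forall i, full lt SN dim (X i)) -> full lt SN dim (fun x => exists i, X i x).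
Proof.
elim: k X => [|k IH] X fullX.
  rewrite (_ : (fun x => _) = X ord0) //.
  by apply: pset_eq => x; rewrite (ord_exists_succ (X^~ x)); split=> [[//|[[]]]|]; last by left.
rewrite (_ : (fun x => _) = fun x => X ord0 x \/ exists j, X (lift ord0 j) x).
  exact: full_union (fullX ord0) (IH _ (fun j => fullX _)).
by apply: pset_eq => x; rewrite (ord_exists_succ (X^~ x)).
Qed.

End Full.

Theorem lemma2p8 (M : Type) (lt : M -> M -> Prop)
    (SM SN : forall n, pset M n -> Prop) (dim : forall n, pset M n -> option nat) :
  o_minimal lt SM -> expansion lt SM SN -> open_definable_L lt SM SN ->
  dim_compatible lt SM SN dim ->
  forall (n k : nat) (X : 'I_k -> pset M n), 0 < k ->
    (forall i, full lt SN dim (X i)) ->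
    full lt SN dim (fun x => exists i, X i x).
Proof.
move=> _ [hS _] _ hD n [//|k] X _.
exact: (full_bigcup hS hD).
Qed.
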